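(* Let $S$ be an AG-groupoid with a zero element $0$. Let $\mathcal{D}$ be the set of all bi-ideals of $S$ and let $\Omega$ be the set of all strongly irreducible bi-ideals $J$ of $S$ with $J\neq S$. For $B\in\mathcal{D}$ put $O_{B}=\{J\in\Omega: B\not\subseteq J\}$. Then $\Gamma(\Omega)=\{O_{B}: B\in\mathcal{D}\}$ is a topology on $\Omega$. Moreover, the map $\phi:\mathcal{D}\to\Gamma(\Omega)$, $\phi(B)=O_{B}$, preserves finite intersections and arbitrary unions, in the sense that $\phi(B_{1}\cap B_{2})=\phi(B_{1})\cap\phi(B_{2})$ for all $B_1,B_2\in\mathcal D$ and $\phi(\langle\bigcup_{\alpha}B_{\alpha}\rangle)=\bigcup_{\alpha}\phi(B_{\alpha})$ for every family $\{B_\alpha\}\subseteq\mathcal D$, where $\langle X\rangle$ denotes the bi-ideal of $S$ generated by $X$ (the smallest bi-ideal containing $X$).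
   Context: An AG-groupoid is a set $S$ with a binary operation satisfying $(ab)c=(cb)a$ for all $a,b,c\in S$. A zero element is an element $0$ with $0s=s0=0$ for all $s\in S$. For nonempty subsets, $AB=\{ab:a\in A,b\in B\}$. A bi-ideal of $S$ is a nonempty subset $B$ with $BB\subseteq B$ and $(BS)B\subseteq B$. A bi-ideal $B$ is strongly irreducible if for all bi-ideals $B_{1},B_{2}$ of $S$, $B_{1}\cap B_{2}\subseteq B$ implies $B_{1}\subseteq B$ or $B_{2}\subseteq B$. *)

Set Implicit Arguments.

Definition set (T : Type) := T -> Prop.
Definition subset {T} (A B : set T) : Prop := forall x, A x -> B x.
Definition setI {T} (A B : set T) : set T := fun x => A x /\ B x.

Definition AG_groupoid {S : Type} (op : S -> S -> S) : Prop :=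
  forall a b c, op (op a b) c = op (op c b) a.

Definition is_zero {S : Type} (op : S -> S -> S) (z : S) : Prop :=
  forall s, op z s = z /\ op s z = z.

Definition setmul {S : Type} (op : S -> S -> S) (A B : set S) : set S :=
  fun x => exists a b, A a /\ B b /\ x = op a b.

Definition bi_ideal {S : Type} (op : S -> S -> S) (B : set S) : Prop :=
  (exists b, B b) /\
  subset (setmul op B B) B /\
  subset (setmul op (setmul op B (fun _ => True)) B) B.

Definition strongly_irreducible {S : Type} (op : S -> S -> S) (B : set S) : Prop :=
  bi_ideal op B /\
  forall B1 B2, bi_ideal op B1 -> bi_ideal op B2 ->
    subset (setI B1 B2) B -> subset B1 B \/ subset B2 B.

Definition Omega {S : Type} (op : S -> S -> S) : set (set S) :=
  fun J => strongly_irreducible op J /\ J <> (fun _ => True).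

Definition O_ {S : Type} (op : S -> S -> S) (B : set S) : set (set S) :=
  fun J => Omega op J /\ ~ subset B J.

Definition Gamma {S : Type} (op : S -> S -> S) : set (set (set S)) :=
  fun U => exists B, bi_ideal op B /\ U = O_ op B.

Definition gen_bi_ideal {S : Type} (op : S -> S -> S) (X : set S) : set S :=
  fun x => forall B, bi_ideal op B -> subset X B -> B x.

Definition is_topology {T : Type} (X : set T) (Top : set (set T)) : Prop :=
  (forall U, Top U -> subset U X) /\
  Top (fun _ => False) /\
  Top X /\
  (forall U V, Top U -> Top V -> Top (setI U V)) /\
  (forall C : set (set T), (forall U, C U -> Top U) ->
     Top (fun x => exists U, C U /\ U x)).

From Stdlib Require Import Classical FunctionalExtensionality PropExtensionality.

Set Implicit Arguments.

(* Every bi-ideal contains the zero element, so {0} and S are bi-ideals and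
   bi-ideals are closed under intersection; the generated bi-ideal <X> is a
   bi-ideal, and a bi-ideal J contains <X> exactly when it contains X.
   Consequently O_<X> consists of the J in Omega not containing X, which
   turns the union of a family of B_i into the union of the O_(B_i).
   Strong irreducibility of the points of Omega gives
   O_(B1 ∩ B2) = O_B1 ∩ O_B2.  The topology axioms then follow: the empty
   set is O_{0}, Omega is O_S, and intersections and unions of opens are
   again of the form O_B. *)

Lemma set_ext {T : Type} (A B : set T) : (forall x, A x <-> B x) -> A = B.
Proof.
  intros HAB. apply functional_extensionality; intro x.
  apply propositional_extensionality, HAB.
Qed.

Section BiIdealSpace.
Variables (S : Type) (op : S -> S -> S) (z : S).
Hypothesis Hz : is_zero op z.

(* Every bi-ideal contains 0: for b in B, 0 = (b 0) b lies in (B S) B. *)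
Lemma zero_in_bi_ideal (B : set S) : bi_ideal op B -> B z.
Proof.
  intros [[b Hb] [_ HBSB]]. destruct (Hz b) as [Hzb Hbz].
  apply HBSB. exists (op b z), b. repeat split; auto.
  - exists b, z. auto.
  - rewrite Hbz, Hzb. reflexivity.
Qed.

Lemma bi_ideal_zero : bi_ideal op (fun x => x = z).
Proof.
  split; [exists z; reflexivity | split].
  - intros x [a [b [-> [-> ->]]]]. apply (Hz z).
  - intros x [a [b [[a' [s [-> [_ ->]]]] [-> ->]]]].
    rewrite (proj1 (Hz s)). apply (Hz z).
Qed.

Lemma bi_ideal_full : bi_ideal op (fun _ => True).
Proof. split; [exists z; exact I | split; intros x _; exact I]. Qed.

Lemma bi_ideal_setI (B1 B2 : set S) :
  bi_ideal op B1 -> bi_ideal op B2 -> bi_ideal op (setI B1 B2).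
Proof.
  intros HB1 HB2.
  pose proof (zero_in_bi_ideal HB1) as Hz1. pose proof (zero_in_bi_ideal HB2) as Hz2.
  destruct HB1 as [_ [HBB1 HBSB1]], HB2 as [_ [HBB2 HBSB2]].
  split; [exists z; split; assumption | split].
  - intros x [a [b [[Ha1 Ha2] [[Hb1 Hb2] ->]]]]. split.
    + apply HBB1. exists a, b. auto.
    + apply HBB2. exists a, b. auto.
  - intros x [a [b [[a' [s [[Ha1 Ha2] [_ ->]]]] [[Hb1 Hb2] ->]]]]. split.
    + apply HBSB1. exists (op a' s), b. split; auto. exists a', s. auto.
    + apply HBSB2. exists (op a' s), b. split; auto. exists a', s. auto.
Qed.

Lemma bi_ideal_gen (X : set S) : bi_ideal op (gen_bi_ideal op X).
Proof.
  split; [|split].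
  - exists z. intros B HB _. exact (zero_in_bi_ideal HB).
  - intros x [a [b [Ha [Hb ->]]]] B HB HXB.
    apply (proj1 (proj2 HB)). exists a, b.
    split; [exact (Ha B HB HXB) | split; [exact (Hb B HB HXB) | reflexivity]].
  - intros x [a [b [[a' [s [Ha' [_ ->]]]] [Hb ->]]]] B HB HXB.
    apply (proj2 (proj2 HB)). exists (op a' s), b.
    split; [exists a', s; split; [exact (Ha' B HB HXB) | auto] |].
    split; [exact (Hb B HB HXB) | reflexivity].
Qed.

Lemma gen_subset_iff (X J : set S) :
  bi_ideal op J -> (subset (gen_bi_ideal op X) J <-> subset X J).
Proof.
  intros HJ; split.
  - intros HgJ x Hx. apply HgJ. intros B _ HXB. exact (HXB x Hx).
  - intros HXJ x Hx. exact (Hx J HJ HXJ).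
Qed.

Lemma O_gen (X : set S) :
  O_ op (gen_bi_ideal op X) = (fun J => Omega op J /\ ~ subset X J).
Proof.
  apply set_ext; intro J. unfold O_.
  split; intros [HO HN]; split; auto; intro Hsub; apply HN;
    apply (gen_subset_iff X (proj1 (proj1 HO))); exact Hsub.
Qed.

Lemma O_gen_union (I : Type) (B : I -> set S) :
  O_ op (gen_bi_ideal op (fun x => exists i, B i x))
  = (fun J => exists i, O_ op (B i) J).
Proof.
  rewrite O_gen. apply set_ext; intro J. split.
  - intros [HO HN]. apply NNPP; intro Hnone. apply HN.
    intros x [i Hi]. apply NNPP; intro Hx. apply Hnone.
    exists i. split; [exact HO | intro Hsub; exact (Hx (Hsub x Hi))].
  - intros [i [HO HN]]. split; [exact HO |].
    intro Hsub. apply HN. intros x Hx. apply Hsub. exists i. exact Hx.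
Qed.

(* phi preserves binary intersections, by strong irreducibility of J. *)
Lemma O_setI (B1 B2 : set S) : bi_ideal op B1 -> bi_ideal op B2 ->
  O_ op (setI B1 B2) = setI (O_ op B1) (O_ op B2).
Proof.
  intros HB1 HB2. apply set_ext; intro J. unfold O_, setI. split.
  - intros [HO HN]. split; split; auto; intro Hsub; apply HN;
      intros x [Hx1 Hx2]; auto.
  - intros [[HO HN1] [_ HN2]]. split; [exact HO |]. intro Hsub.
    destruct (proj2 (proj1 HO) B1 B2 HB1 HB2 Hsub); auto.
Qed.

(* Gamma contains the empty set O_{0}: every J in Omega contains 0. *)
Lemma Gamma_empty : Gamma op (fun _ => False).
Proof.
  exists (fun x => x = z). split; [exact bi_ideal_zero |].
  apply set_ext; intro J. split; [intros [] |].
  intros [[[HJ _] _] HN]. apply HN. intros x ->. exact (zero_in_bi_ideal HJ).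
Qed.

(* Gamma contains Omega = O_S, since every J in Omega is proper. *)
Lemma Gamma_full : Gamma op (Omega op).
Proof.
  exists (fun _ => True). split; [exact bi_ideal_full |].
  apply set_ext; intro J. unfold O_. split.
  - intros HO. split; [exact HO |]. intro Hsub. apply (proj2 HO).
    apply set_ext; intro x. split; auto.
  - intros [HO _]. exact HO.
Qed.

Lemma Gamma_setI (U V : set (set S)) :
  Gamma op U -> Gamma op V -> Gamma op (setI U V).
Proof.
  intros [B1 [HB1 ->]] [B2 [HB2 ->]]. exists (setI B1 B2).
  split; [exact (bi_ideal_setI HB1 HB2) | symmetry; exact (O_setI HB1 HB2)].
Qed.

(* Gamma is closed under arbitrary unions: a union of members O_B of Gamma
   is O_<X>, X the union of the bi-ideals B indexing the family. *)
Lemma Gamma_union (C : set (set (set S))) : (forall U, C U -> Gamma op U) ->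
  Gamma op (fun J => exists U, C U /\ U J).
Proof.
  intros HC.
  set (I := {B : set S | C (O_ op B)}).
  exists (gen_bi_ideal op (fun x => exists i : I, proj1_sig i x)).
  split; [exact (bi_ideal_gen _) |].
  rewrite (O_gen_union (fun i : I => proj1_sig i)).
  apply set_ext; intro J. split.
  - intros [U [HU HUJ]]. destruct (HC U HU) as [B [_ ->]].
    exists (exist _ B HU). exact HUJ.
  - intros [[B HCB] HJ]. exists (O_ op B). split; assumption.
Qed.

End BiIdealSpace.

Theorem theorem2 (S : Type) (op : S -> S -> S) (z : S)
  (HAG : AG_groupoid op) (Hz : is_zero op z) :
  is_topology (Omega op) (Gamma op) /\
  (forall B1 B2, bi_ideal op B1 -> bi_ideal op B2 ->
     O_ op (setI B1 B2) = setI (O_ op B1) (O_ op B2)) /\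
  (forall (I : Type) (B : I -> set S), (forall i, bi_ideal op (B i)) ->
     O_ op (gen_bi_ideal op (fun x => exists i, B i x))
     = (fun J => exists i, O_ op (B i) J)).
Proof.
  split; [| split].
  - split; [| split; [| split; [| split]]].
    + intros U [B [_ ->]] J [HO _]. exact HO.
    + exact (Gamma_empty Hz).
    + exact (Gamma_full op z).
    + exact (Gamma_setI Hz).
    + exact (Gamma_union Hz).
  - intros B1 B2 HB1 HB2. exact (O_setI HB1 HB2).
  - intros I B _. exact (O_gen_union op B).
Qed.
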